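(* There are absolute constants $\gamma>0$ and $C_0\ge 1$ such that for every integer $k>5$ the following holds. For every (deterministic) terminal-cuts scheme for $k$-terminal networks whose edge costs are integers in $\{1,\dots,n^{C_0}\}$ (where $n$ is the number of vertices), there exists such a $k$-terminal network $(G,c)$ on which the memory $M=P(G,c)$ produced by preprocessing occupies at least $2^{\gamma k}$ machine words, where a machine word consists of $\lceil\log_2 n\rceil$ bits.
   Context: A $k$-terminal network $(G,c)$ is an undirected graph $G$ with edge costs $c$ and a set $Q\subseteq V(G)$ of $k$ terminals. For $S\subset Q$, $S\ne\emptyset,Q$, $\bar S=Q\setminus S$, and $\mathrm{mincut}_{G,c}(S,\bar S)$ is the minimum total cost of the set of edges crossing a cut $(W,V(G)\setminus W)$ with $W\cap Q\in\{S,\bar S\}$. A terminal-cuts (TC) scheme consists of a preprocessing map $P$ that maps each $k$-terminal network $(G,c)$ (with the stated edge costs) to a memory image $M$ (a bit string), and a query map $Q(\cdot\,;\cdot)$ that, given $S\subset Q$ and $M$ only (without access to $(G,c)$), outputs a value, such that $Q(S;P(G,c))=\mathrm{mincut}_{G,c}(S,\bar S)$ for all networks and all $S\subset Q$, $S\neq\emptyset,Q$. Storage is measured in machine words of $\Theta(\log n)$ bits. *)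

From mathcomp Require Import all_boot.
From Stdlib Require Import Reals.
Set Implicit Arguments. Unset Strict Implicit. Unset Printing Implicit Defensive.

(* A k-terminal network with m non-terminal vertices: vertex set 'I_(k+m)
   (so n = k + m vertices); terminal number i : 'I_k is vertex lshift m i.
   The undirected graph with edge costs is given by a symmetric cost function
   c with zero diagonal; c u v = 0 means "no edge", c u v > 0 is the cost of
   edge {u,v}. *)
Definition network_ok (k m : nat) (C0 : R) (c : 'I_(k + m) -> 'I_(k + m) -> nat) : Prop :=
  (forall u v, c u v = c v u) /\
  (forall u, c u u = 0) /\
  (forall u v, c u v <> 0 -> Rle (INR (c u v)) (Rpower (INR (k + m)) C0)).

Definition cut_cost (n : nat) (c : 'I_n -> 'I_n -> nat) (W : {set 'I_n}) : nat :=
  \sum_(u in W) \sum_(v in ~: W) c u v.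

Definition terms_in (k m : nat) (W : {set 'I_(k + m)}) : {set 'I_k} :=
  [set i : 'I_k | lshift m i \in W].

(* an upper bound on every cut cost, used as neutral element of the min *)
Definition total_cost (n : nat) (c : 'I_n -> 'I_n -> nat) : nat :=
  \sum_u \sum_v c u v.

Definition mincut (k m : nat) (c : 'I_(k + m) -> 'I_(k + m) -> nat) (S : {set 'I_k}) : nat :=
  \big[minn/total_cost c]_(W : {set 'I_(k + m)} |
        (terms_in W == S) || (terms_in W == ~: S)) cut_cost c W.

Definition TC_scheme (k : nat) (C0 : R)
    (P : forall m : nat, ('I_(k + m) -> 'I_(k + m) -> nat) -> seq bool)
    (Qry : {set 'I_k} -> seq bool -> nat) : Prop :=
  forall (m : nat) (c : 'I_(k + m) -> 'I_(k + m) -> nat),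
    network_ok C0 c ->
    forall S : {set 'I_k}, S != set0 -> S != setT ->
      Qry S (P m c) = mincut c S.

(* word size: ceil(log2 n) bits (up_log 2 n = least e with n <= 2^e) *)
Definition word_bits (n : nat) : nat := up_log 2 n.

Definition words (n : nat) (M : seq bool) : nat :=
  (size M + (word_bits n).-1) %/ word_bits n.

(* A network whose non-terminals ("hubs") are joined only
   to terminals, hub g to terminal a with cost w g a, has a closed-form
   min cut: every hub independently joins the cheaper side, so
   mincut(S) = sum_g min(load_g(S), load_g(Q \ S)).

   Fix a sink terminal z and, for each hub g, a nonempty label
   set T g of terminals avoiding z, with no T g contained in another.
   Weighting hub g by x g (with 0 <= x g < M) on the edges to T g and to z,
   the value mincut(Q \ T g0) + x g0 is a multiple of M, so the query
   Q \ T g0 reveals x g0.  Hence the memory map x |-> P(G_x) is injective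
   on M^m inputs and, by counting, some memory image has at least
   m log2 M bits.

   With p = (k-1)/2 bit positions, a function f : 'I_p -> bool
   gives the label set {2i + f(i) + 1}; this yields m = 2^p hubs.  Taking
   M = 2^(word size) keeps every cost below n^5 and forces at least
   m = 2^p >= 2^(k/4) machine words. *)
From Stdlib Require Import Reals Lra.
From HB Require Import structures.
From mathcomp Require Import all_boot zify.
Set Implicit Arguments. Unset Strict Implicit. Unset Printing Implicit Defensive.

(* [mincut] is a big minimum, whose reindexing lemmas need [minn] to be an
   associative and commutative law. *)
HB.instance Definition _ := SemiGroup.isComLaw.Build nat minn minnA minnC.

Section StarNetwork.
Variables (k m : nat) (w : 'I_m -> 'I_k -> nat).

(* The star network on terminals 'I_k and hubs 'I_m: vertex [rshift k g]
   is hub g, and the only edges are hub--terminal edges of cost [w g a]. *)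
Definition star_net (u v : 'I_(k + m)) : nat :=
  match split u, split v with
  | inl a, inr g | inr g, inl a => w g a
  | _, _ => 0
  end.

Lemma split_lshift (a : 'I_k) : split (lshift m a) = inl a.
Proof. exact: (unsplitK (inl a)). Qed.

Lemma split_rshift (g : 'I_m) : split (rshift k g) = inr g.
Proof. exact: (unsplitK (inr g)). Qed.

Definition hub_load (S : {set 'I_k}) (g : 'I_m) : nat := \sum_(a in S) w g a.

Lemma crossing_from_terminal (W : {set 'I_(k + m)}) (a : 'I_k) :
  \sum_(v in ~: W) star_net (lshift m a) v =
  \sum_(g | rshift k g \notin W) w g a.
Proof.
rewrite big_mkcond big_split_ord /= big1 ?add0n => [|b _]; last first.
  by rewrite /star_net !split_lshift; case: (_ \in _).
rewrite [RHS]big_mkcond; apply: eq_bigr => g _.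
by rewrite /star_net split_lshift split_rshift inE.
Qed.

Lemma crossing_from_hub (W : {set 'I_(k + m)}) (g : 'I_m) :
  \sum_(v in ~: W) star_net (rshift k g) v =
  \sum_(a | lshift m a \notin W) w g a.
Proof.
rewrite big_mkcond big_split_ord /= [X in _ + X]big1 ?addn0 => [|b _]; last first.
  by rewrite /star_net !split_rshift; case: (_ \in _).
rewrite [RHS]big_mkcond; apply: eq_bigr => a _.
by rewrite /star_net split_lshift split_rshift inE.
Qed.

Lemma cut_cost_star (W : {set 'I_(k + m)}) :
  cut_cost star_net W =
  \sum_g (if rshift k g \in W then hub_load (~: terms_in W) g
          else hub_load (terms_in W) g).
Proof.
rewrite /cut_cost big_mkcond big_split_ord /=.
under eq_bigr => a _ do rewrite crossing_from_terminal.
under [X in _ + X]eq_bigr => g _ do rewrite crossing_from_hub.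
rewrite -!big_mkcond exchange_big /= [RHS](bigID (fun g => rshift k g \in W)) /=.
rewrite addnC; congr (_ + _); apply: eq_bigr => g g_W; rewrite ?g_W ?(negbTE g_W);
  by apply: eq_bigl => a; rewrite !inE.
Qed.

Definition star_cut_value (S : {set 'I_k}) : nat :=
  \sum_g minn (hub_load S g) (hub_load (~: S) g).

Lemma star_cut_valueC (S : {set 'I_k}) : star_cut_value (~: S) = star_cut_value S.
Proof. by apply: eq_bigr => g _; rewrite setCK minnC. Qed.

Lemma star_cut_value_le (W : {set 'I_(k + m)}) :
  star_cut_value (terms_in W) <= cut_cost star_net W.
Proof.
rewrite cut_cost_star; apply: leq_sum => g _.
by case: (_ \in W); rewrite ?geq_minl ?geq_minr.
Qed.

Definition best_side (S : {set 'I_k}) : {set 'I_(k + m)} :=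
  [set u | match split u with
           | inl a => a \in S
           | inr g => hub_load (~: S) g <= hub_load S g
           end].

Lemma terms_best_side (S : {set 'I_k}) : terms_in (best_side S) = S.
Proof. by apply/setP => a; rewrite !inE split_lshift. Qed.

Lemma cut_cost_best_side (S : {set 'I_k}) :
  cut_cost star_net (best_side S) = star_cut_value S.
Proof.
rewrite cut_cost_star terms_best_side; apply: eq_bigr => g _.
by rewrite inE split_rshift; case: leqP.
Qed.

Lemma cut_cost_le_total n (c : 'I_n -> 'I_n -> nat) (W : {set 'I_n}) :
  cut_cost c W <= total_cost c.
Proof.
rewrite /cut_cost /total_cost [X in _ <= X](bigID (mem W)) /=.
apply: leq_trans (leq_addr _ _); apply: leq_sum => u _.
by rewrite [X in _ <= X](bigID (mem (~: W))) leq_addr.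
Qed.

Theorem mincut_star (S : {set 'I_k}) : mincut star_net S = star_cut_value S.
Proof.
apply/eqP; rewrite eqn_leq; apply/andP; split.
  rewrite /mincut (bigD1 (best_side S)) /=; last by rewrite terms_best_side eqxx.
  by rewrite cut_cost_best_side geq_minl.
apply: (big_ind (fun v => star_cut_value S <= v)).
- by rewrite -cut_cost_best_side cut_cost_le_total.
- by move=> x y Hx Hy; rewrite leq_min Hx Hy.
move=> W /orP [] /eqP W_S; first by rewrite -W_S star_cut_value_le.
by rewrite -star_cut_valueC -W_S star_cut_value_le.
Qed.

End StarNetwork.

Section Encoding.
Variables (k m M : nat) (z : 'I_k) (T : 'I_m -> {set 'I_k}) (x : 'I_m -> nat).
Hypothesis sink_unlabelled : forall g, z \notin T g.
Hypothesis M_gt0 : 0 < M.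

Definition code_weight (g : 'I_m) (a : 'I_k) : nat :=
  x g * (if a == z then M * #|T g| - 1 else if a \in T g then M else 0).

Let load := hub_load code_weight.

Lemma code_weight_le g a : code_weight g a <= x g * (M * k).
Proof.
rewrite leq_mul2l; apply/orP; right.
have le_TM : M * #|T g| <= M * k.
  by rewrite leq_mul2l; apply/orP; right; rewrite -[X in _ <= X]card_ord max_card.
case: eqP => _; first exact: leq_trans (leq_subr _ _) le_TM.
by case: (_ \in _) => //; rewrite leq_pmulr // (leq_ltn_trans _ (ltn_ord z)).
Qed.

Lemma load_labels g g0 : load (T g0) g = x g * (M * #|T g :&: T g0|).
Proof.
rewrite /load /hub_load (eq_bigr (fun a => if a \in T g then x g * M else 0)).
  rewrite -big_mkcondr (eq_bigl (mem (T g :&: T g0))).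
    by rewrite sum_nat_const mulnC -mulnA.
  by move=> a; rewrite !inE andbC.
move=> a a_in; have a_z : (a == z) = false.
  by apply: contraNF (sink_unlabelled g0) => /eqP <-.
by rewrite /code_weight a_z; case: (_ \in _); rewrite ?muln0.
Qed.

(* Towards the complement of its labels, hub g0 pays only its sink edge. *)
Lemma load_sink_self g0 :
  0 < #|T g0| -> load (~: T g0) g0 + x g0 = x g0 * (M * #|T g0|).
Proof.
move=> labelled; rewrite /load /hub_load (bigD1 z) ?inE ?sink_unlabelled //=.
rewrite big1 => [|a /andP [a_out a_z]]; last first.
  by rewrite inE in a_out; rewrite /code_weight (negbTE a_z) (negbTE a_out) muln0.
by rewrite /code_weight eqxx addn0 subn1 -mulnSr prednK // muln_gt0 M_gt0.
Qed.

(* A hub g having a label outside T g0 pays at least M x g |T g| towards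
   the complement of T g0: its sink edge plus that label. *)
Lemma load_sink_other g g0 :
  (exists2 a, a \in T g & a \notin T g0) -> x g * (M * #|T g|) <= load (~: T g0) g.
Proof.
case=> a a_in a_out; have a_z : a != z by apply: contraNneq (sink_unlabelled g) => <-.
rewrite /load /hub_load (bigD1 z) ?inE ?sink_unlabelled //= (bigD1 a) /=; last first.
  by rewrite !inE a_out a_z.
rewrite addnA; apply: leq_trans (leq_addr _ _).
rewrite /code_weight eqxx (negbTE a_z) a_in -mulnDr leq_mul2l; apply/orP; right.
move: (M * #|T g|) => c; lia.
Qed.

(* The answer to the query Q \ T g0, plus x g0, is a multiple of M: hubs
   g <> g0 side with Q \ T g0 and pay a multiple of M, while hub g0 sides
   with T g0 and pays M x g0 |T g0| - x g0. *)
Theorem query_value_dvd g0 :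
  0 < #|T g0| -> (forall g, g != g0 -> exists2 a, a \in T g & a \notin T g0) ->
  M %| star_cut_value code_weight (~: T g0) + x g0.
Proof.
move=> labelled separated; rewrite /star_cut_value (bigD1 g0) //= setCK.
have le_load g : g != g0 -> load (T g0) g <= load (~: T g0) g.
  move=> g_g0; apply: leq_trans (load_sink_other (separated g g_g0)).
  by rewrite load_labels leq_mul2l leq_mul2l subset_leq_card ?subsetIl ?orbT.
have self_le : load (~: T g0) g0 <= load (T g0) g0.
  by rewrite load_labels setIid -(load_sink_self labelled) leq_addr.
rewrite (minn_idPl self_le) addnAC (load_sink_self labelled) dvdn_add //.
  by rewrite mulnCA dvdn_mulr.
apply: dvdn_sum => g g_g0; rewrite (minn_idPr (le_load g g_g0)) load_labels.
by rewrite mulnCA dvdn_mulr.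
Qed.

End Encoding.

Lemma small_complement_unique M t y1 y2 :
  y1 < M -> y2 < M -> M %| t + y1 -> M %| t + y2 -> y1 = y2.
Proof.
move=> y1_lt y2_lt /eqP t_y1 /eqP t_y2.
rewrite -(modn_small y1_lt) -(modn_small y2_lt); apply/eqP.
by rewrite -(eqn_modDl t) t_y1 t_y2.
Qed.

Section EncodingScheme.
Variables (k m M : nat) (C0 : R) (z : 'I_k) (T : 'I_m -> {set 'I_k}).
Variables (P : forall m : nat, ('I_(k + m) -> 'I_(k + m) -> nat) -> seq bool)
          (Qry : {set 'I_k} -> seq bool -> nat).
Hypothesis scheme : TC_scheme C0 P Qry.
Hypothesis sink_unlabelled : forall g, z \notin T g.
Hypothesis labelled : forall g, 0 < #|T g|.
Hypothesis separated : forall g0 g, g != g0 -> exists2 a, a \in T g & a \notin T g0.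

Definition encoded_net (x : {ffun 'I_m -> 'I_M}) : 'I_(k + m) -> 'I_(k + m) -> nat :=
  star_net (code_weight M z T (fun g => x g)).

Hypothesis encoded_net_ok : forall x, network_ok C0 (encoded_net x).

Lemma query_encoded_net (x : {ffun 'I_m -> 'I_M}) g0 :
  M %| Qry (~: T g0) (@P m (encoded_net x)) + x g0.
Proof.
have M_gt0 : 0 < M by apply: leq_ltn_trans (ltn_ord (x g0)).
rewrite scheme //.
- by rewrite mincut_star; apply: query_value_dvd => //; apply: separated.
- by apply/set0Pn; exists z; rewrite inE sink_unlabelled.
- by rewrite -setC0 (inj_eq (@setC_inj _)) -card_gt0.
Qed.

Lemma encoded_memory_inj : injective (fun x => @P m (encoded_net x)).
Proof.
move=> x y /= same_memory; apply/ffunP => g0; apply: val_inj.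
apply: (small_complement_unique (ltn_ord _) (ltn_ord _) (query_encoded_net x g0)).
by rewrite same_memory query_encoded_net.
Qed.

End EncodingScheme.

(* Padding a string shorter than L to exactly L bits, prefix-free: zeros,
   then a marker 1, then the string. *)
Definition pad_bits (L : nat) (s : seq bool) : seq bool :=
  nseq (L - (size s).+1) false ++ true :: s.

Lemma pad_bits_inj L : injective (pad_bits L).
Proof.
suff padK : cancel (pad_bits L) (fun t => behead (drop (index true t) t)).
  exact: can_inj padK.
move=> s; rewrite /pad_bits; set zeros := L - _.
have -> : index true (nseq zeros false ++ true :: s) = zeros by elim: zeros => //= n ->.
by rewrite drop_size_cat ?size_nseq.
Qed.

Lemma size_pad_bits L s : size s < L -> size (pad_bits L s) = L.
Proof. by rewrite /pad_bits size_cat size_nseq /=; lia. Qed.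

(* Counting: injecting at least 2^L objects into bit strings forces one
   string of length at least L, since fewer than 2^L strings are shorter. *)
Lemma long_bitstring (A : finType) (L : nat) (h : A -> seq bool) :
  injective h -> 2 ^ L <= #|A| -> exists a, L <= size (h a).
Proof.
move=> h_inj cardA; case: (pickP (fun a => L <= size (h a))) => [a long | short].
  by exists a.
pose zeros := nseq_tuple L false.
pose F a : L.-tuple bool := insubd zeros (pad_bits L (h a)).
have valF a : val (F a) = pad_bits L (h a).
  by rewrite val_insubd size_pad_bits ?eqxx // ltnNge short.
have F_inj : injective F.
  by move=> a b /(congr1 val); rewrite !valF => /pad_bits_inj/h_inj.
have F_marked a : F a \in [set~ zeros].
  rewrite !inE; apply/eqP => /(congr1 val); rewrite valF => pad_zero.
  have : true \in pad_bits L (h a) by rewrite mem_cat inE eqxx orbT.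
  by rewrite pad_zero /= mem_nseq andbF.
have : #|A| <= #|[set~ zeros]|.
  rewrite -(card_imset _ F_inj); apply/subset_leq_card/subsetP => _ /imsetP [a _ ->].
  exact: F_marked.
rewrite cardsC1 card_tuple card_bool; move: (expn_gt0 2 L) cardA; lia.
Qed.

Definition bit_labels (k p : nat) (f : {ffun 'I_p -> bool}) : {set 'I_k} :=
  [set a : 'I_k | [exists i : 'I_p, nat_of_ord a == (2 * i + f i).+1]].

Section BitLabels.
Variables (k p : nat).
Hypothesis room : 2 * p < k.

Lemma bit_label_lt (i : 'I_p) (b : bool) : (2 * i + b).+1 < k.
Proof. by have := ltn_ord i; case: b => /=; lia. Qed.

Definition bit_label (i : 'I_p) (b : bool) : 'I_k := Ordinal (bit_label_lt i b).

Lemma bit_labels_sink (a : 'I_k) (f : {ffun 'I_p -> bool}) :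
  nat_of_ord a = 0 -> a \notin bit_labels k f.
Proof. by move=> a0; rewrite inE a0; apply/existsP => -[]. Qed.

Lemma bit_label_mem (f : {ffun 'I_p -> bool}) i : bit_label i (f i) \in bit_labels k f.
Proof. by rewrite inE; apply/existsP; exists i. Qed.

Lemma bit_labels_nonempty (i : 'I_p) (f : {ffun 'I_p -> bool}) : 0 < #|bit_labels k f|.
Proof. by apply/card_gt0P; exists (bit_label i (f i)); apply: bit_label_mem. Qed.

Lemma bit_labels_separated (f f0 : {ffun 'I_p -> bool}) :
  f != f0 -> exists2 a, a \in bit_labels k f & a \notin bit_labels k f0.
Proof.
move=> f_f0; have [i fi] : exists i, f i != f0 i.
  case: (boolP [exists i, f i != f0 i]) => [/existsP // | /existsPn same].
  by case/eqP: f_f0; apply/ffunP => i; apply/eqP/negPn/same.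
exists (bit_label i (f i)); first exact: bit_label_mem.
rewrite inE; apply/existsP => -[j /eqP /= same_label].
have ij : i = j by apply: val_inj; move: same_label; case: (f i); case: (f0 j) => /=; lia.
by move: fi same_label; rewrite -ij; case: (f i); case: (f0 i) => //=; lia.
Qed.

End BitLabels.

Lemma INR_expn a b : INR (a ^ b) = pow (INR a) b.
Proof. by elim: b => [|b IH] //; rewrite expnS mult_INR IH. Qed.

Lemma star_net_ok k m (w : 'I_m -> 'I_k -> nat) (e : nat) :
  0 < k + m -> (forall g a, w g a <= (k + m) ^ e) -> network_ok (INR e) (star_net w).
Proof.
move=> n_gt0 w_le; split; [|split].
- by move=> u v; rewrite /star_net; case: (split u) => ?; case: (split v).
- by move=> u; rewrite /star_net; case: (split u).
move=> u v _; rewrite Rpower_pow; last by apply: lt_0_INR; apply/ltP.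
rewrite -INR_expn; apply/le_INR/leP.
by rewrite /star_net; case: (split u) => ?; case: (split v).
Qed.

Lemma word_bits_gt0 n : 1 < n -> 0 < word_bits n.
Proof. by move=> n_gt1; rewrite up_log_gt0. Qed.

Lemma pow_word_bits_le n : 1 < n -> 2 ^ word_bits n <= 2 * n.
Proof.
move=> n_gt1; have := up_log_gtn (isT : 1 < 2) n_gt1.
have := word_bits_gt0 n_gt1; rewrite /word_bits.
by case: (up_log 2 n) => // b _; rewrite expnS /=; lia.
Qed.

Lemma words_ge n m (s : seq bool) :
  0 < word_bits n -> word_bits n * m <= size s -> m <= words n s.
Proof.
move=> b_gt0 long; rewrite /words -[m](mulKn _ b_gt0).
exact: leq_div2r (leq_trans long (leq_addr _ _)).
Qed.

Lemma encoded_net_cost_ok k m (z : 'I_k) (T : 'I_m -> {set 'I_k})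
    (x : {ffun 'I_m -> 'I_(2 ^ word_bits (k + m))}) :
  1 < k + m -> network_ok (INR 5) (encoded_net z T x).
Proof.
move=> n_gt1; apply: star_net_ok => [|g a]; first lia.
apply: leq_trans (code_weight_le _ _ _ _ _ _) _.
apply: leq_trans (leq_mul (ltnW (ltn_ord (x g))) (leqnn _)) _.
have := pow_word_bits_le n_gt1; move: (2 ^ _) => M.
move: (k + m) n_gt1 (leq_addr m k) => n n_gt1 k_le M_le; rewrite /expn /=.
apply: leq_trans (leq_mul M_le (leq_mul M_le k_le)) _.
have n3_le : 4 * (n * (n * n)) <= (n * n) * (n * (n * n)) by apply: leq_mul; nia.
nia.
Qed.

Lemma half_pred_bounds k : 5 < k -> 2 * (k - 1)./2 < k /\ k <= 4 * (k - 1)./2.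
Proof.
move=> k_gt5; have := odd_double_half (k - 1); rewrite -muln2.
by case: (odd (k - 1)) => /=; lia.
Qed.

Lemma quarter_power_le k p : k <= 4 * p -> Rle (Rpower 2 (/ 4 * INR k)) (INR (2 ^ p)).
Proof.
move=> k_le; have two : INR 2 = IZR 2 by rewrite /=; lra.
rewrite INR_expn two -Rpower_pow; last lra.
apply: Rle_Rpower; first lra.
by have := le_INR _ _ (leP k_le); rewrite mult_INR /=; lra.
Qed.

Lemma tc_memory_lower_bound k
    (P : forall m : nat, ('I_(k + m) -> 'I_(k + m) -> nat) -> seq bool)
    (Qry : {set 'I_k} -> seq bool -> nat) :
  5 < k -> TC_scheme (INR 5) P Qry ->
  exists m (c : 'I_(k + m) -> 'I_(k + m) -> nat),
    network_ok (INR 5) c /\ 2 ^ (k - 1)./2 <= words (k + m) (P m c).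
Proof.
move=> k_gt5 scheme; have [room k_le] := half_pred_bounds k_gt5.
set p := (k - 1)./2 in room k_le *.
pose m := #|{: {ffun 'I_p -> bool}}|.
have card_m : m = 2 ^ p by rewrite /m card_ffun card_bool card_ord.
have n_gt1 : 1 < k + m by lia.
have i0 : 'I_p by exists 0; lia.
pose z : 'I_k := Ordinal (leq_ltn_trans (leq0n _) room).
pose T (g : 'I_m) : {set 'I_k} := bit_labels k (enum_val g).
have sink : forall g, z \notin T g by move=> g; apply: bit_labels_sink.
have labelled : forall g, 0 < #|T g| by move=> g; apply: bit_labels_nonempty.
have separated : forall g0 g, g != g0 -> exists2 a, a \in T g & a \notin T g0.
  by move=> g0 g g_g0; apply: bit_labels_separated; rewrite // (inj_eq enum_val_inj).
have memory_inj := encoded_memory_inj scheme sink labelled separated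
  (fun x => encoded_net_cost_ok z T x n_gt1).
have [|x long] := long_bitstring (L := word_bits (k + m) * m) memory_inj.
  by rewrite card_ffun !card_ord expnM.
exists m, (encoded_net z T x); split; first exact: encoded_net_cost_ok.
by rewrite -card_m; apply: words_ge long; apply: word_bits_gt0.
Qed.

Theorem theorem1p4 :
  exists (gamma C0 : R), Rlt 0 gamma /\ Rle 1 C0 /\
    forall k : nat, 5 < k ->
    forall (P : forall m : nat, ('I_(k + m) -> 'I_(k + m) -> nat) -> seq bool)
           (Qry : {set 'I_k} -> seq bool -> nat),
      TC_scheme C0 P Qry ->
      exists (m : nat) (c : 'I_(k + m) -> 'I_(k + m) -> nat),
        network_ok C0 c /\
        Rle (Rpower 2 (Rmult gamma (INR k))) (INR (words (k + m) (P m c))).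
Proof.
exists (Rinv 4), (INR 5); split; first lra.
split; first by rewrite /=; lra.
move=> k k_gt5 P Qry scheme.
have [m [c [c_ok many_words]]] := tc_memory_lower_bound k_gt5 scheme.
exists m, c; split => //; apply: Rle_trans (le_INR _ _ (leP many_words)).
by apply: quarter_power_le; case: (half_pred_bounds k_gt5).
Qed.
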